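(* Let $\mathcal{L}=(S,\Sigma,\to)$ be a pLTS in which every relevant distribution has finite support, and let $\mathcal{L}'$ be its associated standard LTS, with bisimilarity approximants $\sim'_m$. Then for every $n\in\mathbb{N}$: (i) for relevant distributions $d_1,d_2$: $d_1,d_2$ are $\sim_n$-equivalent (where $\sim_n$ is the approximant in $\mathcal{L}$) if and only if $d_1\sim'_{3n+2}d_2$ in $\mathcal{L}'$; (ii) for relevant sets $T_1,T_2$: $T_1,T_2$ are $\sim_n$-similar if and only if $T_1\sim'_{3n+1}T_2$ in $\mathcal{L}'$.
   Context: For a countable set $A$, a probability distribution on $A$ is a function $d\colon A\to[0,1]\cap\mathbb{Q}$ with $\sum_{a\in A}d(a)=1$; $\mathrm{supp}(d)=\{a\mid d(a)>0\}$; $\mathcal{D}(A)$ is the set of distributions; $d(B)=\sum_{a\in B}d(a)$; $d$ is Dirac if $d(a)=1$ for some $a$. A pLTS is $\mathcal{L}=(S,\Sigma,\to)$ with $S$ finite or countable, $\Sigma$ finite, $\to\subseteq S\times\Sigma\times\mathcal{D}(S)$ image-finite; write $s\xrightarrow{a}d$. A standard LTS is a pLTS whose distributions are all Dirac. For an equivalence $R$ on $S$, $d,d'$ are $R$-equivalent if $d(E)=d'(E)$ for every $R$-class $E$; subsets $T_1,T_2\subseteq S$ are $R$-similar if they intersect exactly the same $R$-classes. Approximants: $s\sim_0t$ always; $s\sim_{n+1}t$ iff every $s\xrightarrow{a}d$ is matched by some $t\xrightarrow{a}d'$ with $d,d'$ $\sim_n$-equivalent and vice versa. Associated LTS: $d$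 is relevant if $s\xrightarrow{a}d$ for some $s,a$; a nonempty $T\subseteq S$ is relevant if $T\subseteq\mathrm{supp}(d)$ for some relevant $d$; $\rho$ is relevant if $\rho=d(T)$ for relevant $d$ and nonempty $T\subseteq\mathrm{supp}(d)$. $\mathcal{L}'=(S',\Sigma',\Rightarrow)$ has states: $S$ plus relevant distributions plus relevant sets (disjoint union); actions: $\Sigma$ plus relevant numbers plus $\{\#\}$ (disjoint union); transitions: $s\overset{a}{\Rightarrow}d$ iff $s\xrightarrow{a}d$; $d\overset{\rho}{\Rightarrow}T$ iff $d,\rho$ relevant, $T\subseteq\mathrm{supp}(d)$, $d(T)\ge\rho$; $T\overset{\#}{\Rightarrow}s$ iff $T$ relevant and $s\in T$. *)

From HB Require Import structures.
From mathcomp Require Import all_boot all_order all_algebra.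
Set Implicit Arguments. Unset Strict Implicit. Unset Printing Implicit Defensive.
Import Order.TTheory GRing.Theory Num.Theory.
From Stdlib Require List.
Local Open Scope ring_scope.

(* Unordered sum of a (nonnegative) rational-valued function over the elements
   of a countable type satisfying P:  sum_on P f r  means  sum_{x | P x} f x = r,
   i.e. r is the supremum of all finite partial sums. *)
Definition sum_on {A : eqType} (P : A -> Prop) (f : A -> rat) (r : rat) : Prop :=
  (forall s : seq A, uniq s -> (forall x, x \in s -> P x) ->
      \sum_(x <- s) f x <= r) /\
  (forall eps : rat, 0 < eps -> exists s : seq A,
      [/\ uniq s, (forall x, x \in s -> P x) & r - eps < \sum_(x <- s) f x]).

Definition is_distr {A : eqType} (d : A -> rat) : Prop :=
  (forall a, 0 <= d a <= 1) /\ sum_on (fun _ => True) d 1.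

Definition supp {A : eqType} (d : A -> rat) (a : A) : Prop := 0 < d a.

Definition is_pLTS (S : countType) (Sig : finType)
    (tr : S -> Sig -> (S -> rat) -> Prop) : Prop :=
  (forall s a d, tr s a d -> is_distr d) /\
  (forall s a, exists l : seq (S -> rat), forall d, tr s a d -> List.In d l).

(* d, d' are R-equivalent: d(E) = d'(E) for every R-class E = {x | R x0 x} *)
Definition dequiv {A : eqType} (R : A -> A -> Prop) (d d' : A -> rat) : Prop :=
  forall (x0 : A) (r : rat), sum_on (R x0) d r <-> sum_on (R x0) d' r.

Definition rsimilar {A : Type} (R : A -> A -> Prop) (T1 T2 : A -> Prop) : Prop :=
  forall x0 : A, (exists x, T1 x /\ R x0 x) <-> (exists x, T2 x /\ R x0 x).

Section PLTS.
Variables (S : countType) (Sig : finType) (tr : S -> Sig -> (S -> rat) -> Prop).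

Fixpoint papprox (n : nat) : S -> S -> Prop :=
  match n with
  | 0 => fun _ _ => True
  | n'.+1 => fun s t =>
      (forall a d, tr s a d -> exists d', tr t a d' /\ dequiv (papprox n') d d') /\
      (forall a d', tr t a d' -> exists d, tr s a d /\ dequiv (papprox n') d d')
  end.

Definition rel_distr (d : S -> rat) : Prop := exists s a, tr s a d.

Definition rel_set (T : S -> Prop) : Prop :=
  (exists x, T x) /\ exists d, rel_distr d /\ (forall x, T x -> supp d x).

Definition rel_num (rho : rat) : Prop :=
  exists d (T : S -> Prop), [/\ rel_distr d, (exists x, T x),
      (forall x, T x -> supp d x) & sum_on T d rho].

Inductive lstate_raw :=
  | LS of S | LD of (S -> rat) | LT of (S -> Prop).
Inductive lact_raw :=
  | LA of Sig | LN of rat | LH.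

Definition lstate_ok (x : lstate_raw) : Prop :=
  match x with LS _ => True | LD d => rel_distr d | LT T => rel_set T end.
Definition lact_ok (b : lact_raw) : Prop :=
  match b with LA _ => True | LN rho => rel_num rho | LH => True end.

(* S' = S + relevant distributions + relevant sets;
   Sigma' = Sigma + relevant numbers + {#} *)
Definition lstate := {x : lstate_raw | lstate_ok x}.
Definition lact := {b : lact_raw | lact_ok b}.

Definition lstep_raw (x : lstate_raw) (b : lact_raw) (y : lstate_raw) : Prop :=
  match x, b, y with
  | LS s, LA a, LD d => tr s a d
  | LD d, LN rho, LT T =>
      [/\ rel_distr d, rel_num rho, (forall x, T x -> supp d x) &
          exists r, sum_on T d r /\ rho <= r]
  | LT T, LH, LS s => rel_set T /\ T s
  | _, _, _ => False
  end.

Definition lstep (x : lstate) (b : lact) (y : lstate) : Prop :=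
  lstep_raw (proj1_sig x) (proj1_sig b) (proj1_sig y).

End PLTS.

Fixpoint lapprox {X B : Type} (step : X -> B -> X -> Prop) (n : nat) : X -> X -> Prop :=
  match n with
  | 0 => fun _ _ => True
  | n'.+1 => fun x y =>
      (forall b x', step x b x' -> exists y', step y b y' /\ lapprox step n' x' y') /\
      (forall b y', step y b y' -> exists x', step x b x' /\ lapprox step n' x' y')
  end.

From HB Require Import structures.
From mathcomp Require Import all_boot all_order all_algebra.
From mathcomp Require Import boolp lra zify.
Set Implicit Arguments. Unset Strict Implicit. Unset Printing Implicit Defensive.
Import Order.TTheory GRing.Theory Num.Theory.
Local Open Scope ring_scope.

(* Three steps of the associated LTS simulate one step of the pLTS:
   s -a-> d picks the distribution, d -rho-> T picks a set of the support
   carrying mass at least rho, and T -#-> s' picks a state of it.  Hence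
   ~'_{3n} on states, ~'_{3n+1} on sets and ~'_{3n+2} on distributions match
   ~_n, ~_n-similarity and ~_n-equivalence, by one induction on n.  A
   rho-move of d1 to T is answered by d2 with the ~_n-saturation of T cut
   down to the support of d2; the masses agree because two finitely
   supported distributions agreeing on every class agree on every saturated
   set.  Conversely, answering the moves of d1 to a class cut down to its
   support bounds the class mass under d1 by that under d2, and symmetrically. *)

Section FiniteSums.
Variable A : eqType.
Implicit Types (d f : A -> rat) (P Q U : A -> Prop) (L : seq A).

Definition fsum L d P := \sum_(x <- L | `[< P x >]) d x.

Lemma sum_on_le P f r r' : sum_on P f r -> sum_on P f r' -> r <= r'.
Proof.
move=> [_ approx_r] [bound_r' _]; rewrite leNgt; apply/negP => lt_r'r.
have e_gt0 : 0 < r - r' by lra.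
have [s [us sP hs]] := approx_r _ e_gt0.
by have := bound_r' s us sP; lra.
Qed.

Lemma sum_on_uniq P f r r' : sum_on P f r -> sum_on P f r' -> r = r'.
Proof. by move=> a b; apply/eqP; rewrite eq_le (sum_on_le a b) (sum_on_le b a). Qed.

Lemma sum_on_fsum L d P : uniq L -> (forall x, 0 <= d x) ->
  (forall x, 0 < d x -> x \in L) -> sum_on P d (fsum L d P).
Proof.
move=> uL d_ge0 dL; split.
- move=> s us sP.
  rewrite (bigID (fun x => x \in L)) /= [X in _ + X]big1 ?addr0; last first.
    move=> x /negP xNL; apply/eqP; rewrite eq_le d_ge0 andbT leNgt.
    by apply/negP => /dL.
  have s_L : perm_eq [seq x <- s | true && (x \in L)] [seq x <- L | x \in s].
    apply: uniq_perm; rewrite ?filter_uniq // => x.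
    by rewrite !mem_filter andbC.
  rewrite -big_filter (perm_big _ s_L) big_filter /fsum.
  rewrite big_mkcond [X in _ <= X]big_mkcond /=; apply: ler_sum => x _.
  by case: ifP => xs; [rewrite (asboolT (sP x xs)) | case: ifP].
- move=> eps eps_gt0; exists [seq x <- L | `[< P x >]]; split.
  + exact: filter_uniq.
  + by move=> x; rewrite mem_filter => /andP[/asboolP].
  + by rewrite big_filter /fsum; lra.
Qed.

Lemma le_fsum L d P Q : (forall x, 0 <= d x) -> (forall x, P x -> Q x) ->
  fsum L d P <= fsum L d Q.
Proof.
move=> d_ge0 PQ; rewrite /fsum big_mkcond [X in _ <= X]big_mkcond /=.
apply: ler_sum => x _.
by case: (asboolP (P x)) => Px; [rewrite (asboolT (PQ x Px)) | case: ifP].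
Qed.

Lemma eq_fsum L d P Q : (forall x, P x <-> Q x) -> fsum L d P = fsum L d Q.
Proof. by move=> PQ; apply: eq_bigl => x; apply/asboolP/asboolP => /PQ. Qed.

Lemma fsum_supp L d U : (forall x, 0 <= d x) ->
  fsum L d (fun y => U y /\ supp d y) = fsum L d U.
Proof.
move=> d_ge0; rewrite /fsum big_mkcond [RHS]big_mkcond /=.
apply: eq_bigr => x _; case: (asboolP (U x)) => Ux.
- case: (asboolP (U x /\ supp d x)) => // notsupp.
  apply/esym/eqP; rewrite eq_le d_ge0 andbT leNgt; apply/negP => dx.
  by apply: notsupp.
- by case: (asboolP (U x /\ supp d x)) => // -[].
Qed.

Lemma fsum_gt0P L d P : (forall x, 0 <= d x) -> 0 < fsum L d P ->
  exists x, [/\ x \in L, P x & 0 < d x].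
Proof.
move=> d_ge0 sum_gt0.
case: (boolP (has (fun x => `[< P x >] && (0 < d x)) L)).
  by move=> /hasP[x xL /andP[/asboolP Px dx]]; exists x.
move=> /hasPn none; exfalso; move: sum_gt0.
rewrite /fsum big_seq_cond big1 ?ltxx // => x /andP[xL Px].
have := none x xL; rewrite Px /= => dx.
by apply/eqP; rewrite eq_le d_ge0 andbT leNgt.
Qed.

Lemma le_term_fsum L d P x : uniq L -> (forall x, 0 <= d x) -> x \in L -> P x ->
  d x <= fsum L d P.
Proof.
move=> uL d_ge0 xL Px; rewrite /fsum big_mkcond (bigD1_seq x) //= (asboolT Px).
by rewrite lerDl; apply: sumr_ge0 => i _; case: ifP.
Qed.

Variable R : A -> A -> Prop.
Hypothesis R_refl : forall x, R x x.
Hypothesis R_sym : forall x y, R x y -> R y x.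
Hypothesis R_trans : forall x y z, R x y -> R y z -> R x z.

(* Expand fsum L d1 U as a sum over pairs of R-related points, where the pair
   (x, y) carries d1 x * d2 y / w x and w x is the common mass of the class
   of x; the weights of y's partners add up to w x (or d1 x = 0 = w x). *)
Lemma fsum_pairs L d1 d2 (w : A -> rat) U : uniq L ->
  (forall x, 0 <= d1 x) ->
  (forall x, w x = fsum L d1 (R x)) -> (forall x, w x = fsum L d2 (R x)) ->
  fsum L d1 U = \sum_(x <- L) \sum_(y <- L)
     (if `[< U x /\ R x y >] then d1 x * d2 y / w x else 0).
Proof.
move=> uL d1_ge0 w_d1 w_d2.
rewrite /fsum big_mkcond /=; apply: eq_big_seq => x xL.
case: (asboolP (U x)) => Ux; last first.
  by rewrite big1 // => y _; case: (asboolP (U x /\ R x y)) => // -[].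
have -> : \sum_(y <- L) (if `[< U x /\ R x y >] then d1 x * d2 y / w x else 0)
   = d1 x * fsum L d2 (R x) / w x.
  rewrite /fsum [in RHS]big_mkcond mulr_sumr mulr_suml; apply: eq_bigr => y _.
  case: (asboolP (U x /\ R x y)) => [[_ Rxy]|notUR]; first by rewrite (asboolT Rxy).
  case: (asboolP (R x y)) => Rxy; first by exfalso; apply: notUR.
  by rewrite mulr0 mul0r.
rewrite -w_d2; have [wx0|wx_neq0] := eqVneq (w x) 0; last by rewrite mulfK.
have : d1 x <= w x by rewrite w_d1; exact: le_term_fsum.
rewrite wx0 => d1x_le0.
by have -> : d1 x = 0 by apply/eqP; rewrite eq_le d1x_le0 d1_ge0.
Qed.

Lemma fsum_saturated L d1 d2 U : uniq L ->
  (forall x, 0 <= d1 x) -> (forall x, 0 <= d2 x) ->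
  (forall x, fsum L d1 (R x) = fsum L d2 (R x)) ->
  (forall x y, U x -> R x y -> U y) ->
  fsum L d1 U = fsum L d2 U.
Proof.
move=> uL d1_ge0 d2_ge0 classes U_sat.
pose w x := fsum L d1 (R x).
have w_d2 x : w x = fsum L d2 (R x) by rewrite /w classes.
rewrite (@fsum_pairs L d1 d2 w) // (@fsum_pairs L d2 d1 w) //.
rewrite exchange_big /=; apply: eq_bigr => x _; apply: eq_bigr => y _.
case: (asboolP (U x /\ R x y)) => [[Ux Rxy]|notUR].
  rewrite asboolT; last by split; [apply: U_sat Ux Rxy | apply: R_sym].
  have -> : w x = w y by apply: eq_fsum => z; split; eauto.
  by rewrite [d1 y * _]mulrC.
case: (asboolP (U y /\ R y x)) => // -[Uy Ryx].
by exfalso; apply: notUR; split; [apply: U_sat Uy Ryx | apply: R_sym].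
Qed.

End FiniteSums.

Lemma dequiv_fsumP (A : eqType) (R : A -> A -> Prop) L d1 d2 : uniq L ->
  (forall x, 0 <= d1 x) -> (forall x, 0 <= d2 x) ->
  (forall x, 0 < d1 x -> x \in L) -> (forall x, 0 < d2 x -> x \in L) ->
  dequiv R d1 d2 <-> forall x0, fsum L d1 (R x0) = fsum L d2 (R x0).
Proof.
move=> uL d1_ge0 d2_ge0 L_d1 L_d2; split.
- move=> e x0; apply: (@sum_on_uniq _ (R x0) d2); last exact: sum_on_fsum.
  by apply/(e x0); apply: sum_on_fsum.
- move=> e x0 r; split => sum_r.
  + rewrite (sum_on_uniq sum_r (sum_on_fsum (R x0) uL d1_ge0 L_d1)) e.
    exact: sum_on_fsum.
  + rewrite (sum_on_uniq sum_r (sum_on_fsum (R x0) uL d2_ge0 L_d2)) -e.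
    exact: sum_on_fsum.
Qed.

Lemma dequiv_sym (A : eqType) (R : A -> A -> Prop) d d' :
  dequiv R d d' -> dequiv R d' d.
Proof. by move=> e x0 r; apply: iff_sym. Qed.

Lemma dequiv_trans (A : eqType) (R : A -> A -> Prop) d d' d'' :
  dequiv R d d' -> dequiv R d' d'' -> dequiv R d d''.
Proof. by move=> e1 e2 x0 r; apply: iff_trans (e1 x0 r) (e2 x0 r). Qed.

Lemma lapprox_sym (X B : Type) (step : X -> B -> X -> Prop) k x y :
  lapprox step k x y -> lapprox step k y x.
Proof.
elim: k x y => //= k IH x y [fwd bwd]; split.
- by move=> b y' st; have [x' [st' l]] := bwd b y' st; exists x'; split => //; apply: IH.
- by move=> b x' st; have [y' [st' l]] := fwd b x' st; exists y'; split => //; apply: IH.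
Qed.

Section PapproxEquivalence.
Variables (S : countType) (Sig : finType) (tr : S -> Sig -> (S -> rat) -> Prop).

Lemma papprox_refl n s : papprox tr n s s.
Proof. by case: n => //= m; split => a d h; exists d. Qed.

Lemma papprox_sym n s t : papprox tr n s t -> papprox tr n t s.
Proof.
case: n => //= m [fwd bwd]; split => a d h.
- by have [d' [h' e]] := bwd a d h; exists d'; split => //; apply: dequiv_sym.
- by have [d' [h' e]] := fwd a d h; exists d'; split => //; apply: dequiv_sym.
Qed.

Lemma papprox_trans n s t u : papprox tr n s t -> papprox tr n t u ->
  papprox tr n s u.
Proof.
case: n => //= m [st_fwd st_bwd] [tu_fwd tu_bwd]; split => a d h.
- have [d' [h' e]] := st_fwd a d h; have [d'' [h'' e']] := tu_fwd a d' h'.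
  by exists d''; split => //; apply: dequiv_trans e e'.
- have [d' [h' e]] := tu_bwd a d h; have [d'' [h'' e']] := st_bwd a d' h'.
  by exists d''; split => //; apply: dequiv_trans e' e.
Qed.

End PapproxEquivalence.

Section AssociatedLTS.
Variables (S : countType) (Sig : finType) (tr : S -> Sig -> (S -> rat) -> Prop).
Hypothesis rel_distr_ge0 : forall d, rel_distr tr d -> forall x, 0 <= d x.
Hypothesis rel_distr_fin : forall d : S -> rat, rel_distr tr d ->
  exists s : seq S, forall x, supp d x -> x \in s.

Local Notation R n := (papprox tr n).
Local Notation lapp := (lapprox (@lstep S Sig tr)).

Lemma common_support d1 d2 : rel_distr tr d1 -> rel_distr tr d2 ->
  exists L : seq S, [/\ uniq L, (forall x, 0 < d1 x -> x \in L) &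
                      (forall x, 0 < d2 x -> x \in L)].
Proof.
move=> h1 h2; have [s1 s1P] := rel_distr_fin h1; have [s2 s2P] := rel_distr_fin h2.
exists (undup (s1 ++ s2)); split; first exact: undup_uniq.
- by move=> x /s1P xs; rewrite mem_undup mem_cat xs.
- by move=> x /s2P xs; rewrite mem_undup mem_cat xs orbT.
Qed.

Definition approx_states n := forall s t (h1 : lstate_ok tr (LS s)) (h2 : lstate_ok tr (LS t)),
  R n s t <-> lapp (3 * n)%N (exist _ (LS s) h1) (exist _ (LS t) h2).

Definition approx_distrs n := forall d1 d2 (h1 : rel_distr tr d1) (h2 : rel_distr tr d2),
  dequiv (R n) d1 d2 <-> lapp (3 * n + 2)%N (exist _ (LD d1) h1) (exist _ (LD d2) h2).

Definition approx_sets n := forall T1 T2 (h1 : rel_set tr T1) (h2 : rel_set tr T2),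
  rsimilar (R n) T1 T2 <-> lapp (3 * n + 1)%N (exist _ (LT T1) h1) (exist _ (LT T2) h2).

Lemma approx_sets_of_states n : approx_states n -> approx_sets n.
Proof.
move=> states T1 T2 h1 h2; rewrite addn1 /=; split.
- move=> sim; split.
  + move=> [[a|rho|] okb] [[s|d|T] okx]; rewrite /lstep //= => -[_ T1s].
    have [|t [T2t Rst]] := (sim s).1; first by exists s; split => //; apply: papprox_refl.
    by exists (exist _ (LS t) I); split; [split | apply/(states s t)].
  + move=> [[a|rho|] okb] [[t|d|T] okx]; rewrite /lstep //= => -[_ T2t].
    have [|s [T1s Rts]] := (sim t).2; first by exists t; split => //; apply: papprox_refl.
    exists (exist _ (LS s) I); split; first by split.
    by apply/(states s t); apply: papprox_sym.
- move=> [fwd bwd] x0; split.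
  + move=> [x [T1x Rx0x]].
    have [[[t|d|T] oky] [st lap]] :=
      fwd (exist (lact_ok tr) (@LH Sig) I) (exist _ (LS x) I) (conj h1 T1x) => //.
    case: st => _ T2t; exists t; split => //.
    by apply: papprox_trans Rx0x _; apply/(states x t I oky).
  + move=> [t [T2t Rx0t]].
    have [[[x|d|T] oky] [st lap]] :=
      bwd (exist (lact_ok tr) (@LH Sig) I) (exist _ (LS t) I) (conj h2 T2t) => //.
    case: st => _ T1x; exists x; split => //; apply: papprox_trans Rx0t _.
    by apply: papprox_sym; apply/(states x t oky I).
Qed.

Lemma approx_states_succ n : approx_distrs n -> approx_states n.+1.
Proof.
move=> distrs s t h1 h2.
have -> : (3 * n.+1 = (3 * n + 2).+1)%N by lia.
rewrite /=; split.
- move=> [fwd bwd]; split.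
  + move=> [[a|rho|] okb] [[s'|d|T] okx]; rewrite /lstep //= => st.
    have [d' [h' e]] := fwd a d st.
    have okd' : lstate_ok tr (LD d') by exists t, a.
    by exists (exist _ (LD d') okd'); split => //; apply/(distrs d d' okx okd').
  + move=> [[a|rho|] okb] [[s'|d|T] okx]; rewrite /lstep //= => st.
    have [d' [h' e]] := bwd a d st.
    have okd' : lstate_ok tr (LD d') by exists s, a.
    by exists (exist _ (LD d') okd'); split => //; apply/(distrs d' d okd' okx).
- move=> [fwd bwd]; split => a d st.
  + have okd : lstate_ok tr (LD d) by exists s, a.
    have [[[u|d'|T] oky] [st' lap]] :=
      fwd (exist (lact_ok tr) (LA a) I) (exist _ (LD d) okd) st => //.
    by exists d'; split => //; apply/(distrs d d' okd oky).
  + have okd : lstate_ok tr (LD d) by exists t, a.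
    have [[[u|d'|T] oky] [st' lap]] :=
      bwd (exist (lact_ok tr) (LA a) I) (exist _ (LD d) okd) st => //.
    by exists d'; split => //; apply/(distrs d' d oky okd).
Qed.

Lemma dequiv_lstep_match n (sets : approx_sets n) d1 d2
    (h1 : rel_distr tr d1) (h2 : rel_distr tr d2) :
  dequiv (R n) d1 d2 -> forall b x',
  lstep (exist _ (LD d1) h1) b x' -> exists y',
  lstep (exist _ (LD d2) h2) b y' /\ lapp (3 * n + 1)%N x' y'.
Proof.
move=> e [[a|rho|] okb] [[s|d|T1] okT1] //.
rewrite /lstep /= => -[_ okrho T1_supp [r [sum_r rho_le]]].
have [L [uL L_d1 L_d2]] := common_support h1 h2.
have d1_ge0 := rel_distr_ge0 h1; have d2_ge0 := rel_distr_ge0 h2.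
have classes := (dequiv_fsumP (R n) uL d1_ge0 d2_ge0 L_d1 L_d2).1 e.
have R_trans := @papprox_trans _ _ tr n.
have meets_supp2 x : T1 x -> exists y, R n x y /\ supp d2 y.
  move=> T1x; have : 0 < fsum L d2 (R n x).
    rewrite -classes; apply: lt_le_trans (T1_supp x T1x) _.
    by apply: le_term_fsum => //; [exact: L_d1 (T1_supp x T1x) | apply: papprox_refl].
  by move=> /(fsum_gt0P d2_ge0)[y [_ Rxy d2y]]; exists y.
pose U y := exists x, T1 x /\ R n x y.
pose T2 y := U y /\ supp d2 y.
have sim : rsimilar (R n) T1 T2.
  move=> x0; split.
  - move=> [x [T1x Rx0x]]; have [y [Rxy d2y]] := meets_supp2 x T1x.
    by exists y; split; [split => //; exists x | apply: R_trans Rx0x Rxy].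
  - move=> [y [[[x [T1x Rxy]] _] Rx0y]]; exists x; split => //.
    by apply: R_trans Rx0y _; apply: papprox_sym.
have okT2 : rel_set tr T2.
  split; last by exists d2; split => // y [].
  case: okT1 => [[x T1x] _]; have [y [Rxy d2y]] := meets_supp2 x T1x.
  by exists y; split => //; exists x.
exists (exist _ (LT T2) okT2); split; last by apply/(sets T1 T2 okT1 okT2).
rewrite /lstep /=; split => //; first by move=> y [].
exists (fsum L d2 T2); split; first exact: sum_on_fsum.
rewrite (sum_on_uniq sum_r (sum_on_fsum T1 uL d1_ge0 L_d1)) in rho_le.
apply: (le_trans rho_le); apply: (@le_trans _ _ (fsum L d1 U)).
  by apply: le_fsum => // x T1x; exists x; split => //; apply: papprox_refl.
rewrite (@fsum_saturated _ (R n) (@papprox_refl _ _ tr n) (@papprox_sym _ _ tr n)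
  R_trans L d1 d2 U) //; first by rewrite fsum_supp.
by move=> x y [z [T1z Rzx]] Rxy; exists z; split => //; apply: R_trans Rzx Rxy.
Qed.

Lemma le_class_mass_of_lstep_match n (sets : approx_sets n) d1 d2
    (h1 : rel_distr tr d1) (h2 : rel_distr tr d2) L :
  uniq L -> (forall x, 0 < d1 x -> x \in L) -> (forall x, 0 < d2 x -> x \in L) ->
  (forall b x', lstep (exist _ (LD d1) h1) b x' -> exists y',
     lstep (exist _ (LD d2) h2) b y' /\ lapp (3 * n + 1)%N x' y') ->
  forall x0, fsum L d1 (R n x0) <= fsum L d2 (R n x0).
Proof.
move=> uL L_d1 L_d2 match_d1 x0.
have d1_ge0 := rel_distr_ge0 h1; have d2_ge0 := rel_distr_ge0 h2.
have [|mass_gt0] := lerP (fsum L d1 (R n x0)) 0.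
  by move/le_trans; apply; apply: sumr_ge0.
have [x [_ Rx0x d1x]] := fsum_gt0P d1_ge0 mass_gt0.
pose T1 y := R n x0 y /\ supp d1 y.
have okT1 : rel_set tr T1 by split; [exists x | exists d1; split => // y []].
pose rho := fsum L d1 T1.
have okrho : rel_num tr rho.
  by exists d1, T1; split => //; [exists x | move=> y [] | exact: sum_on_fsum].
have st : lstep (exist _ (LD d1) h1) (exist (lact_ok tr) (LN Sig rho) okrho)
              (exist _ (LT T1) okT1).
  rewrite /lstep /=; split => //; first by move=> y [].
  by exists rho; split => //; exact: sum_on_fsum.
have [[[u|d'|T2] okT2] [st2 lap]] := match_d1 _ _ st => //.
move: st2; rewrite /lstep /= => -[_ _ _ [r2 [sum_r2 rho_le]]].
have sim : rsimilar (R n) T1 T2 by apply/(sets T1 T2 okT1 okT2).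
have T2_class y : T2 y -> R n x0 y.
  move=> T2y; have [|z [[Rx0z _] Ryz]] := (sim y).2; first by exists y; split => //; apply: papprox_refl.
  by apply: papprox_trans Rx0z _; apply: papprox_sym.
rewrite -(fsum_supp _ (R n x0) d1_ge0) -/T1 -/rho; apply: (le_trans rho_le).
by rewrite (sum_on_uniq sum_r2 (sum_on_fsum T2 uL d2_ge0 L_d2)); apply: le_fsum.
Qed.

Lemma approx_distrs_of_sets n : approx_sets n -> approx_distrs n.
Proof.
move=> sets d1 d2 h1 h2.
have -> : (3 * n + 2 = (3 * n + 1).+1)%N by lia.
have [L [uL L_d1 L_d2]] := common_support h1 h2.
have e_iff := dequiv_fsumP (R n) uL (rel_distr_ge0 h1) (rel_distr_ge0 h2) L_d1 L_d2.
rewrite /=; split.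
- move=> e; split; first exact: dequiv_lstep_match.
  move=> b y' st; have [x' [st' lap]] := dequiv_lstep_match sets h1 (dequiv_sym e) st.
  by exists x'; split => //; apply: lapprox_sym.
- move=> [fwd bwd]; apply/e_iff => x0; apply/eqP; rewrite eq_le; apply/andP; split.
  + exact: (le_class_mass_of_lstep_match sets (h1:=h1) (h2:=h2)).
  + apply: (le_class_mass_of_lstep_match sets (h1:=h2) (h2:=h1)) => // b x' st.
    by have [y' [st' lap]] := bwd b x' st; exists y'; split => //; apply: lapprox_sym.
Qed.

Lemma approx_states_all n : approx_states n.
Proof.
elim: n => [|n IH]; first by move=> s t h1 h2; rewrite muln0.
exact/approx_states_succ/approx_distrs_of_sets/approx_sets_of_states.
Qed.

End AssociatedLTS.

Theorem mainTheorem2 (S : countType) (Sig : finType)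
    (tr : S -> Sig -> (S -> rat) -> Prop)
    (HL : is_pLTS tr)
    (Hfin : forall d : S -> rat, rel_distr tr d ->
              exists s : seq S, forall x, supp d x -> x \in s)
    (n : nat) :
  (forall (d1 d2 : S -> rat) (h1 : rel_distr tr d1) (h2 : rel_distr tr d2),
      dequiv (papprox tr n) d1 d2 <->
      lapprox (@lstep S Sig tr) (3 * n + 2)%N
        (exist _ (LD d1) h1) (exist _ (LD d2) h2)) /\
  (forall (T1 T2 : S -> Prop) (h1 : rel_set tr T1) (h2 : rel_set tr T2),
      rsimilar (papprox tr n) T1 T2 <->
      lapprox (@lstep S Sig tr) (3 * n + 1)%N
        (exist _ (LT T1) h1) (exist _ (LT T2) h2)).
Proof.
have ge0 d : rel_distr tr d -> forall x, 0 <= d x.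
  by move=> [s [a h]] x; have [/(_ x)/andP[]] := HL.1 s a d h.
have sets := approx_sets_of_states (approx_states_all ge0 Hfin n).
by split; [exact: approx_distrs_of_sets | exact: sets].
Qed.
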